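(* Let $k$ be a field of characteristic $p>0$ and $A$ a $k$-vector space of finite dimension $n\ge1$. For every $r\ge pn-1$, $S_{\le r}A=SA$.
   Context: $SA=\bigoplus_{m\ge0}S^mA$ is the symmetric algebra of $A$ ($S^0A=k$, $S^mA$ the $m$-th symmetric power, with pure symmetric tensors $a_1\otimes_s\dots\otimes_s a_m$). The linear map $\partial\colon SA\to SA\otimes A$ is given by $\partial(\lambda)=0$ for $\lambda\in S^0A$ and $\partial(a_1\otimes_s\dots\otimes_s a_m)=\sum_{i=1}^m(a_1\otimes_s\dots\otimes_s a_{i-1}\otimes_s a_{i+1}\otimes_s\dots\otimes_s a_m)\otimes a_i$. Iterates: $\partial^0=1_{SA}$ and $\partial^{r+1}:=\partial;(\partial^r\otimes 1_A)\colon SA\to SA\otimes A^{\otimes(r+1)}$. Define $S_{\le r}A:=\ker(\partial^{r+1})\subseteq SA$. *)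

From mathcomp Require Import all_boot all_order all_algebra.
From mathcomp Require Import mpoly.
Set Implicit Arguments. Unset Strict Implicit. Unset Printing Implicit Defensive.
Import GRing.Theory.
Local Open Scope ring_scope.

(* A = k^n with standard basis e_0..e_{n-1};  SA = S(k^n) = {mpoly k[n]}
   (x_j = e_j).  The basis of A^{(x) r} is indexed by words of length r,
   encoded left-nested: word n (r+1) = word n r * 'I_n, the last letter
   being the last (rightmost) tensor factor. An element of SA (x) A^{(x) r}
   is thus a function  word n r -> SA  (coefficients on the basis). *)
Fixpoint word (n r : nat) : Type :=
  match r with
  | 0 => unit
  | r'.+1 => (word n r' * 'I_n)%type
  end.

(* partial : SA -> SA (x) A.  On a pure symmetric tensor a_1 ... a_m it is
   sum_i (a_1..^a_i..a_m) (x) a_i; in coordinates its e_j-component is the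
   formal partial derivative with respect to x_j. *)
Definition partial (k : fieldType) (n : nat) (f : {mpoly k[n]}) : 'I_n -> {mpoly k[n]} :=
  fun j => mderiv j f.

(* partial^0 = 1,  partial^{r+1} = partial ; (partial^r (x) 1_A). *)
Fixpoint partial_pow (k : fieldType) (n r : nat) : {mpoly k[n]} -> word n r -> {mpoly k[n]} :=
  match r with
  | 0 => fun f _ => f
  | r'.+1 => fun f (w : word n r'.+1) => @partial_pow k n r' (partial f w.2) w.1
  end.

Definition S_le (k : fieldType) (n r : nat) (f : {mpoly k[n]}) : Prop :=
  forall w : word n r.+1, @partial_pow k n r.+1 f w = 0.

From mathcomp Require Import all_boot all_order all_algebra.
From mathcomp Require Import mpoly.
From mathcomp Require Import zify.
Set Implicit Arguments. Unset Strict Implicit. Unset Printing Implicit Defensive.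
Import GRing.Theory.
Local Open Scope ring_scope.

(* On the basis word w = (j_1, ..., j_(r+1)), the component of partial^(r+1) f
   is the iterated derivative of f along the letters of w.  Partial derivatives
   commute, and a word of length at least p n over n letters uses some letter
   j at least p times, so that component factors through the p-th derivative
   in x_j, which sends x^m to m(m-1)...(m-p+1) x^(m - p e_j), a multiple of p!,
   hence zero in characteristic p. *)

Lemma dvdn_ffact (m n : nat) : (0 < m)%N -> (m %| n ^_ m)%N.
Proof. by move=> m_gt0; rewrite -bin_ffact dvdn_mull // dvdn_fact // m_gt0 leqnn. Qed.

Lemma sum_count_mem (T : finType) (s : seq T) :
  (\sum_(x : T) count_mem x s)%N = size s.
Proof.
elim: s => [|y s IHs] /=; first by rewrite big1.
rewrite big_split /= IHs (bigD1 y) //= eqxx big1 ?addn0 // => x.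
by rewrite eq_sym => /negbTE ->.
Qed.

Lemma count_mem_pigeonhole (T : finType) (s : seq T) (m : nat) :
  (#|T| * m < size s)%N -> exists x, (m < count_mem x s)%N.
Proof.
move=> lt_size; apply/existsP; apply: contraLR lt_size.
rewrite negb_exists -leqNgt => /forallP le_count.
rewrite -sum_count_mem -sum_nat_const; apply: leq_sum => x _.
by rewrite leqNgt le_count.
Qed.

Section PcharDerivatives.

Variables (R : nzRingType) (n p : nat).
Hypothesis pcharRp : p \in [pchar R].

Lemma mderivn_pchar (i : 'I_n) (f : {mpoly R[n]}) : f^`M(i, p) = 0.
Proof.
have p_gt0 := prime_gt0 (pcharf_prime pcharRp).
rewrite mderivnE big1 // => m _.
have /eqP -> : ((m i) ^_ p)%:R == 0 :> R.
  by rewrite -(dvdn_pcharf pcharRp) dvdn_ffact.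
by rewrite mul0r scale0r.
Qed.

Lemma foldr_mderiv0 (s : seq 'I_n) : foldr (@mderiv n R) 0 s = 0.
Proof. by elim: s => //= i s ->; rewrite mderiv0. Qed.

Lemma foldr_mderiv_nseq (i : 'I_n) (k : nat) (f : {mpoly R[n]}) :
  foldr (@mderiv n R) f (nseq k i) = f^`M(i, k).
Proof. by rewrite mderivn_iter; elim: k => //= k ->. Qed.

Lemma foldr_mderiv_pchar (s : seq 'I_n) (i : 'I_n) (f : {mpoly R[n]}) :
  (p <= count_mem i s)%N -> foldr (@mderiv n R) f s = 0.
Proof.
move=> le_p_count.
pose rest := filter (predC1 i) s ++ nseq (count_mem i s - p) i.
have perm_s : perm_eq s (rest ++ nseq p i).
  rewrite -catA -nseqD subnK // -(perm_filterC (pred1 i) s) perm_catC perm_cat2l.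
  by have /all_pred1P -> := filter_all (pred1 i) s; rewrite size_filter.
rewrite (mderiv_perm _ perm_s) foldr_cat foldr_mderiv_nseq mderivn_pchar.
exact: foldr_mderiv0.
Qed.

End PcharDerivatives.

Fixpoint letters (n r : nat) : word n r -> seq 'I_n :=
  match r with
  | 0 => fun _ => [::]
  | r'.+1 => fun w => rcons (@letters n r' w.1) w.2
  end.

Lemma size_letters (n r : nat) (w : word n r) : size (letters w) = r.
Proof. by elim: r w => //= r IHr [w j]; rewrite size_rcons IHr. Qed.

Lemma partial_powE (k : fieldType) (n r : nat) (f : {mpoly k[n]}) (w : word n r) :
  partial_pow f w = foldr (@mderiv n k) f (letters w).
Proof. by elim: r f w => //= r IHr f [w j]; rewrite IHr -cats1 foldr_cat. Qed.

Theorem proposition7p6 (k : fieldType) (p n : nat) :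
  prime p -> (p \in [pchar k]) -> (1 <= n)%N ->
  forall r : nat, (p * n - 1 <= r)%N ->
  forall f : {mpoly k[n]}, S_le r f.
Proof.
move=> p_prime pcharkp n_gt0 r le_r f w.
have p_gt0 := prime_gt0 p_prime.
have [i lt_count] : exists i : 'I_n, (p.-1 < count_mem i (letters w))%N.
  by apply: count_mem_pigeonhole; rewrite card_ord size_letters; nia.
have le_p_count : (p <= count_mem i (letters w))%N by rewrite -(prednK p_gt0).
by rewrite partial_powE (foldr_mderiv_pchar pcharkp _ le_p_count).
Qed.
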